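(* Let $\mathcal{A}$ be a complete topological ring and let $\varphi\colon\mathcal{A}\rightarrow\mathcal{B}$ be a complete topological $\mathcal{A}$-algebra. Let $\mathfrak{S}=\mathrm{Spf}(\mathcal{A})$ and let $f\colon\mathfrak{X}=\mathrm{Spf}(\mathcal{B})\rightarrow\mathfrak{S}$ be the corresponding affine ind-scheme and affine ind-$\mathfrak{S}$-scheme. Then actions $\mathbb{G}_{a,\mathfrak{S}}\widehat{\times}_{\mathfrak{S}}\mathfrak{X}\rightarrow\mathfrak{X}$ of the additive group ind-scheme $\mathbb{G}_{a,\mathfrak{S}}$ on $\mathfrak{X}$ are in one-to-one correspondence with topologically integrable iterated higher $\mathcal{A}$-derivations $D=\{D^{(i)}\}_{i\geq 0}$ of $\mathcal{B}$.
   Context: Conventions: all topological abelian groups, rings and modules are linearly topologized and admit a countable fundamental system of neighbourhoods of $0$ consisting of open subgroups (resp. open ideals, open submodules); homomorphisms of topological rings/modules are continuous homomorphisms. The separated completion of a topological ring $\mathcal{A}$ is $\widehat{\mathcal{A}}=\varprojlim_{\mathfrak{a}}\mathcal{A}/\mathfrak{a}$ ($\mathfrak{a}$ running over open ideals, each quotient discrete) with the inverse limit topology; $\mathcal{A}$ is complete if the canonical map $\mathcal{A}\to\widehat{\mathcal{A}}$ is an isomorphism of topological rings. A complete topological $\mathcal{A}$-algebra is a complete topological ring $\mathcal{B}$ with a continuous ring homomorphism $\mathcal{A}\to\mathcal{B}$. Restricted power series: for a complete topological ring $\mathcal{B}$, $\mathcal{B}\{T_1,\dots,T_r\}$ is the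 subring of $\mathcal{B}[[T_1,\dots,T_r]]$ of series $\sum_I b_IT^I$ whose coefficients converge to $0$ (for every open ideal $\mathfrak{b}$, all but finitely many $b_I$ lie in $\mathfrak{b}$), with the topology whose fundamental system of open ideals consists of the series with all coefficients in $\mathfrak{b}$, $\mathfrak{b}$ open in $\mathcal{B}$; equivalently $\mathcal{B}\{T_1,\dots,T_r\}=\varprojlim_{\mathfrak{b}}(\mathcal{B}/\mathfrak{b})[T_1,\dots,T_r]$. Affine ind-schemes: for a complete topological ring $\mathcal{A}$, $\mathrm{Spf}(\mathcal{A})$ is the set of open prime ideals of $\mathcal{A}$ with the topology induced by the Zariski topology of $\mathrm{Spec}(\mathcal{A})$, equipped with the sheaf of topological rings $\mathcal{O}_{\mathrm{Spf}(\mathcal{A})}=\varprojlim_n (j_n)_*\mathcal{O}_{\mathrm{Spec}(\mathcal{A}/\mathfrak{a}_n)}$ (restricted to $\mathrm{Spf}(\mathcal{A})$), where $(\mathfrak{a}_n)$ is a fundamental system of open ideals and $j_n\colon\mathrm{Spec}(\mathcal{A}/\mathfrak{a}_n)\to\mathrm{Spec}(\mathcal{A})$ the closed immersions; it is a locally topologically ringed space with global sections $\mathcal{A}$. Affine ind-schemes are locally topologically ringed spaces isomorphic to some $\mathrm{Spf}(\mathcal{A})$, and morphisms between them are the morphisms $\mathrm{Spf}(\varphi)$ induced by continuous ring homomorphisms $\varphi$; for $\mathfrak{S}=\mathrm{Spf}(\mathcal{A})$, the category of affine ind-$\mathfrak{S}$-schemes is thereby anti-equivalent to the category of complete topological $\mathcal{A}$-algebras,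 and the fibre product $\mathrm{Spf}(\mathcal{B})\widehat{\times}_{\mathfrak{S}}\mathrm{Spf}(\mathcal{B}')$ is $\mathrm{Spf}(\mathcal{B}\widehat{\otimes}_{\mathcal{A}}\mathcal{B}')$, where $\widehat{\otimes}$ is the completed tensor product (separated completion of $\mathcal{B}\otimes_{\mathcal{A}}\mathcal{B}'$ for the topology generated by $U\otimes\mathcal{B}'+\mathcal{B}\otimes V$, $U,V$ open ideals). The additive group ind-scheme $\mathbb{G}_{a,\mathfrak{S}}$ is $\mathrm{Spf}(\mathcal{A}\{T\})$ with group law $\mathrm{Spf}(m)$, $m\colon\mathcal{A}\{T\}\to\mathcal{A}\{T,T'\}$, $T\mapsto T+T'$, and neutral section $\mathrm{Spf}(\epsilon)$, $\epsilon\colon\mathcal{A}\{T\}\to\mathcal{A}$, $T\mapsto 0$; one has $\mathbb{G}_{a,\mathfrak{S}}\widehat{\times}_{\mathfrak{S}}\mathrm{Spf}(\mathcal{B})\cong\mathrm{Spf}(\mathcal{B}\{T\})$. An action is a morphism of affine ind-$\mathfrak{S}$-schemes $\mu\colon\mathbb{G}_{a,\mathfrak{S}}\widehat{\times}_{\mathfrak{S}}\mathfrak{X}\to\mathfrak{X}$ satisfying $\mu\circ(\mathrm{id}\times\mu)=\mu\circ(m\times\mathrm{id})$ and $\mu\circ(\mathrm{Spf}(\epsilon)\times\mathrm{id})=$ the canonical isomorphism $\mathfrak{S}\widehat{\times}_{\mathfrak{S}}\mathfrak{X}\cong\mathfrak{X}$. Iterated higher derivations: a continuous iterated higher $\mathcal{A}$-derivation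 of $\mathcal{B}$ is a family $D=\{D^{(i)}\}_{i\ge0}$ of continuous $\mathcal{A}$-module homomorphisms $D^{(i)}\colon\mathcal{B}\to\mathcal{B}$ with $D^{(0)}=\mathrm{id}_{\mathcal{B}}$, $D^{(i)}(bb')=\sum_{j=0}^iD^{(j)}(b)D^{(i-j)}(b')$, and $D^{(i)}\circ D^{(j)}=\binom{i+j}{i}D^{(i+j)}$. It is topologically integrable if the sequence $(D^{(i)})_{i}$ converges continuously to $0$: for every $b\in\mathcal{B}$ and every open ideal $\mathfrak{b}'$ of $\mathcal{B}$ there exist an open ideal $\mathfrak{b}$ and $n_0$ with $D^{(n)}(b+\mathfrak{b})\subseteq\mathfrak{b}'$ for all $n\ge n_0$. *)

(* Algebraic (anti-equivalent) rendering of Theorem 3.6: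
   affine ind-schemes Spf(A) are represented by their complete topological
   rings of global sections, and morphisms of affine ind-S-schemes by
   continuous A-algebra homomorphisms (anti-equivalence stated in the
   paper's conventions). *)
From HB Require Import structures.
From mathcomp Require Import all_boot all_order all_algebra.
Set Implicit Arguments. Unset Strict Implicit. Unset Printing Implicit Defensive.
Import Order.TTheory GRing.Theory.
Local Open Scope ring_scope.

Definition is_ideal (R : comPzRingType) (J : R -> Prop) : Prop :=
  [/\ J 0, (forall x y, J x -> J y -> J (x - y)) & (forall r x, J x -> J (r * x))].

(* The topology of R is given by a decreasing sequence of ideals (I n)_n,
   a fundamental system of open ideals: an ideal is open iff it contains
   some I n. *)
Definition lin_top (R : comPzRingType) (I : nat -> R -> Prop) : Prop :=
  (forall n, is_ideal (I n)) /\ (forall n x, I n.+1 x -> I n x).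

(* R -> lim_n R / I n is bijective: injective (separated) and surjective
   (every compatible family is the image of some element). *)
Definition complete_top (R : comPzRingType) (I : nat -> R -> Prop) : Prop :=
  lin_top I /\
  (forall x, (forall n, I n x) -> x = 0) /\
  (forall x : nat -> R, (forall n, I n (x n.+1 - x n)) ->
     exists y, forall n, I n (y - x n)).

Definition continuous_top (R S : comPzRingType) (IR : nat -> R -> Prop)
  (IS : nat -> S -> Prop) (f : R -> S) : Prop :=
  forall n, exists m, forall x, IR m x -> IS n (f x).

(** ** Restricted power series B{T} as coefficient sequences;
       B{T,T'} as double sequences (coefficient of T^i T'^j at (i,j)). *)

Section Series.
Variables (B : comPzRingType) (IB : nat -> B -> Prop).

Definition restricted (s : nat -> B) : Prop :=
  forall n, exists N, forall k, (N <= k)%N -> IB n (s k).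

Definition ps_mul (s t : nat -> B) : nat -> B :=
  fun k => \sum_(j < k.+1) s j * t (k - j)%N.

Definition ps_const (b : B) : nat -> B := fun k => if k == 0%N then b else 0.

(* pullback along  m x id : G_a x G_a x X -> G_a x X,  i.e. the continuous
   B-algebra map B{T} -> B{T,T'}, T |-> T + T'. *)
Definition pull_m_id (s : nat -> B) : nat -> nat -> B :=
  fun i j => 'C(i + j, i)%:R * s (i + j)%N.

(* pullback along  id x mu : G_a x (G_a x X) -> G_a x X, where mu^# : B -> B{T'}
   acts on coefficients:  sum_i a_i T^i |-> sum_i mu^#(a_i)(T') T^i. *)
Definition pull_id_mu (mu : B -> nat -> B) (s : nat -> B) : nat -> nat -> B :=
  fun i j => mu (s i) j.

(* pullback along  eps x id : S x X -> G_a x X, i.e. B{T} -> B, T |-> 0 *)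
Definition pull_eps (s : nat -> B) : B := s 0%N.
End Series.

(** ** G_a-actions, given by the comorphism mu^# : B -> B{T} *)

Definition is_Ga_action (A B : comPzRingType) (IA : nat -> A -> Prop)
  (IB : nat -> B -> Prop) (phi : {rmorphism A -> B}) (mu : B -> nat -> B) : Prop :=
  (forall b, restricted IB (mu b)) /\
  (forall b b' k, mu (b - b') k = mu b k - mu b' k) /\
  (forall b b', mu (b * b') = ps_mul (mu b) (mu b')) /\
  mu 1 = ps_const 1 /\
  (forall a, mu (phi a) = ps_const (phi a)) /\
  (forall n, exists m, forall b, IB m b -> forall k, IB n (mu b k)) /\
  (* mu o (id x mu) = mu o (m x id) *)
  (forall b, pull_id_mu mu (mu b) = pull_m_id (mu b)) /\
  (* mu o (eps x id) = canonical isomorphism S x X = X *)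
  (forall b, pull_eps (mu b) = b).

Definition is_top_int_ihd (A B : comPzRingType) (IA : nat -> A -> Prop)
  (IB : nat -> B -> Prop) (phi : {rmorphism A -> B}) (D : nat -> B -> B) : Prop :=
  (forall i b b', D i (b + b') = D i b + D i b') /\
  (forall i a b, D i (phi a * b) = phi a * D i b) /\
  (forall i, continuous_top IB IB (D i)) /\
  (forall b, D 0%N b = b) /\
  (forall i b b', D i (b * b') = \sum_(j < i.+1) D j b * D (i - j)%N b') /\
  (forall i j b, D i (D j b) = 'C(i + j, i)%:R * D (i + j)%N b) /\
  (* topological integrability: (D^(i))_i converges continuously to 0 *)
  (forall b n, exists m n0, forall k, (n0 <= k)%N ->
      forall c, IB m c -> IB n (D k (b + c))).

(* An action mu corresponds to its comorphism mu^# : B -> B{T}, and writing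
   mu^#(b) = sum_i D^(i)(b) T^i identifies the two structures coefficientwise:
   mu^# multiplicative <-> Leibniz rule, associativity of the action (via
   T |-> T + T') <-> D^(i) o D^(j) = binom(i+j, i) D^(i+j), the counit axiom
   <-> D^(0) = id, and restrictedness plus continuity of mu^# <-> topological
   integrability.  The only non-formal step is that continuity of mu^# is
   uniform in the coefficient index: integrability at b = 0 controls all but
   finitely many D^(k), and the remaining ones are each continuous. *)
From mathcomp Require Import all_boot all_order all_algebra.
From Stdlib Require Import FunctionalExtensionality.
Import GRing.Theory.
Set Implicit Arguments. Unset Strict Implicit.
Local Open Scope ring_scope.

Lemma bin_sym (m n : nat) : 'C(m + n, m) = 'C(m + n, n).
Proof. by rewrite -bin_sub ?leq_addr // addKn. Qed.

Section LinearTopology.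
Variables (B : comPzRingType) (IB : nat -> B -> Prop).
Hypothesis hIB : lin_top IB.

Lemma lin_top0 n : IB n 0.
Proof. by case: (hIB.1 n). Qed.

Lemma lin_topB n x y : IB n x -> IB n y -> IB n (x - y).
Proof. by case: (hIB.1 n) => _ hB _; apply: hB. Qed.

Lemma lin_topD n x y : IB n x -> IB n y -> IB n (x + y).
Proof.
move=> hx hy; have := lin_topB hx (lin_topB (lin_top0 n) hy).
by rewrite sub0r opprK.
Qed.

Lemma lin_top_mono m n x : (m <= n)%N -> IB n x -> IB m x.
Proof.
elim: n x => [|n IHn] x; first by rewrite leqn0 => /eqP ->.
rewrite leq_eqVlt => /orP[/eqP -> //|]; rewrite ltnS => le_mn hx.
by apply: IHn => //; apply: hIB.2.
Qed.

Lemma equicontinuous_of_eventually (D : nat -> B -> B) :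
  (forall k, continuous_top IB IB (D k)) ->
  (forall n, exists m n0, forall k, (n0 <= k)%N ->
     forall c, IB m c -> IB n (D k c)) ->
  forall n, exists m, forall b, IB m b -> forall k, IB n (D k b).
Proof.
move=> hcont heventual n; have [m0 [n0 hlate]] := heventual n.
have [m1 hearly] : exists m, forall b, IB m b ->
    forall k, (k < n0)%N -> IB n (D k b).
  elim: n0 {hlate} => [|n0 [m IHm]]; first by exists 0%N.
  have [m' hm'] := hcont n0 n; exists (maxn m m') => b hb k.
  rewrite ltnS leq_eqVlt => /orP[/eqP ->|lt_kn0].
    by apply: hm'; apply: lin_top_mono hb; rewrite leq_maxr.
  by apply: IHm => //; apply: lin_top_mono hb; rewrite leq_maxl.
exists (maxn m0 m1) => b hb k; case: (ltnP k n0) => hk.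
  by apply: hearly => //; apply: lin_top_mono hb; rewrite leq_maxr.
by apply: hlate => //; apply: lin_top_mono hb; rewrite leq_maxl.
Qed.

End LinearTopology.

Lemma morphD_of_morphB (U V : zmodType) (f : U -> V) :
  (forall b b', f (b - b') = f b - f b') -> forall b b', f (b + b') = f b + f b'.
Proof.
move=> fB b b'.
have f0 : f 0 = 0 by have := fB 0 0; rewrite !subrr.
have fN x : f (- x) = - f x by rewrite -sub0r fB f0 sub0r.
by rewrite -[b']opprK fB !fN !opprK.
Qed.

Lemma morphB_of_morphD (U V : zmodType) (f : U -> V) :
  (forall b b', f (b + b') = f b + f b') -> forall b b', f (b - b') = f b - f b'.
Proof.
move=> fD b b'.
have f0 : f 0 = 0 by apply: (@addrI _ (f 0)); rewrite -fD !addr0.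
have fN x : f (- x) = - f x by apply: (@addrI _ (f x)); rewrite -fD !subrr.
by rewrite fD fN.
Qed.

Lemma higher_derivation1 (B : pzRingType) (D : nat -> B -> B) :
  (forall b, D 0%N b = b) ->
  (forall i b b', D i (b * b') = \sum_(j < i.+1) D j b * D (i - j)%N b') ->
  forall i, (0 < i)%N -> D i 1 = 0.
Proof.
move=> D0 DM; elim/ltn_ind=> -[//|i] IHi _.
have := DM i.+1 1 1; rewrite mulr1 big_ord_recr big_ord_recl /= subn0 subnn D0.
rewrite big1 => [|j _]; last by rewrite IHi ?mul0r //= ltnS ltn_ord.
rewrite addr0 mul1r mulr1 => D1_double.
by apply: (@addrI _ (D i.+1 1)); rewrite addr0 -D1_double.
Qed.

Section Correspondence.
Variables (A B : comPzRingType) (IA : nat -> A -> Prop) (IB : nat -> B -> Prop).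
Variable phi : {rmorphism A -> B}.
Hypothesis hIB : lin_top IB.

Lemma Ga_action_higher_derivation (mu : B -> nat -> B) :
  is_Ga_action IA IB phi mu -> is_top_int_ihd IA IB phi (fun i b => mu b i).
Proof.
move=> [restr [muB [muM [_ [muA [mu_cont [mu_assoc mu_counit]]]]]]].
have muD i : forall b b', mu (b + b') i = mu b i + mu b' i.
  exact: (morphD_of_morphB (f := fun b => mu b i)).
split; first exact: muD.
split.
  move=> i a b; rewrite muM muA /ps_mul big_ord_recl big1 ?addr0.
    by rewrite /ps_const /= subn0.
  by move=> j _; rewrite /ps_const /= mul0r.
split; first by move=> i n; have [m hm] := mu_cont n; exists m => b /hm.
split; first exact: mu_counit.
split; first by move=> i b b'; rewrite muM.
split.
  move=> i j b; have := congr1 (fun s => s j i) (mu_assoc b).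
  by rewrite /pull_id_mu /pull_m_id /= => ->; rewrite addnC bin_sym.
move=> b n; have [N hN] := restr b n; have [m hm] := mu_cont n.
exists m, N => k hk c hc; rewrite muD; apply: lin_topD => //; first exact: hN.
exact: hm.
Qed.

Lemma higher_derivation_Ga_action (D : nat -> B -> B) :
  is_top_int_ihd IA IB phi D -> is_Ga_action IA IB phi (fun b i => D i b).
Proof.
move=> [DD [DA [Dcont [D0 [DM [Dcomp Dint]]]]]].
have D1 := higher_derivation1 D0 DM.
have Dconst b : (forall k, (0 < k)%N -> D k b = 0) -> D^~ b = ps_const b.
  by move=> Dk; apply: functional_extensionality => -[|k]; rewrite ?D0 ?Dk.
split.
  move=> b n; have [m [n0 hn0]] := Dint b n; exists n0 => k hk.
  by have := hn0 k hk 0 (lin_top0 hIB m); rewrite addr0.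
split; first by move=> b b' k; apply: (morphB_of_morphD (f := D k)).
split; first by move=> b b'; apply: functional_extensionality => k; rewrite DM.
split; first by apply: Dconst; apply: D1.
split; first by move=> a; apply: Dconst => k k_gt0; rewrite -[phi a]mulr1 DA D1 ?mulr0.
split.
  apply: equicontinuous_of_eventually => // n.
  have [m [n0 hn0]] := Dint 0 n; exists m, n0 => k hk c hc.
  by have := hn0 k hk c hc; rewrite add0r.
split.
  move=> b; do 2 apply: functional_extensionality => ?.
  by rewrite /pull_id_mu /pull_m_id Dcomp addnC bin_sym.
by move=> b; rewrite /pull_eps D0.
Qed.

End Correspondence.

Theorem theorem3p6 (A B : comPzRingType) (IA : nat -> A -> Prop)
  (IB : nat -> B -> Prop) (phi : {rmorphism A -> B})
  (hA : complete_top IA) (hB : complete_top IB)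
  (hphi : continuous_top IA IB phi) :
  (forall mu : B -> nat -> B, is_Ga_action IA IB phi mu ->
     is_top_int_ihd IA IB phi (fun i b => mu b i)) /\
  (forall D : nat -> B -> B, is_top_int_ihd IA IB phi D ->
     exists! mu : B -> nat -> B,
       is_Ga_action IA IB phi mu /\ (fun i b => mu b i) = D).
Proof.
have hIB := proj1 hB.
split=> [|D hD]; first exact: Ga_action_higher_derivation.
exists (fun b i => D i b).
by split=> [|mu [_ <-]]; first split; first exact: higher_derivation_Ga_action.
Qed.
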